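(* Let $\mathcal T$ consist of projective objects and be contravariantly finite in $\mathcal A$, and let $f:X\to Y$ be an epimorphism in $\mathcal A$. Then $\overline f$ is a strong monomorphism in the left triangulated category $\underline{\mathcal A}$ if and only if $\ker(f)\in\mathcal T$.
   Context: $\mathcal A$ is abelian, $\mathcal T$ a full additive subcategory closed under finite direct sums and direct summands; $\underline{\mathcal A}=\mathcal A/\langle\mathcal T\rangle$ is the stable category, $\overline f$ the class of $f$. For $\mathcal T$ contravariantly finite, $\underline{\mathcal A}$ is left triangulated: $\Omega Y=\ker(p_Y)$ for a $\mathcal T$-precover $p_Y:T_Y\to Y$; for $f:X\to Y$ one forms the pullback $Z$ of $f$ and $p_Y$ with projection $g:Z\to X$ and induced $\Omega Y\to Z$; left triangles are diagrams isomorphic to $\Omega Y\to Z\xrightarrow{\overline g}X\xrightarrow{\overline f}Y$. $\overline f$ is a strong monomorphism if there is a left triangle $\Omega Y\to0\to X\xrightarrow{\overline f}Y$. *)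

From HB Require Import structures.
From mathcomp Require Import all_boot all_algebra.
Set Implicit Arguments. Unset Strict Implicit. Unset Printing Implicit Defensive.
Import GRing.Theory.
Local Open Scope ring_scope.

Record preadditive := PreAdditive {
  Obj : Type;
  Mor : Obj -> Obj -> zmodType;
  idm : forall X, Mor X X;
  comp : forall {X Y Z}, Mor Y Z -> Mor X Y -> Mor X Z;
  compA : forall X Y Z W (h : Mor Z W) (g : Mor Y Z) (f : Mor X Y),
      comp h (comp g f) = comp (comp h g) f;
  comp1m : forall X Y (f : Mor X Y), comp (idm Y) f = f;
  compm1 : forall X Y (f : Mor X Y), comp f (idm X) = f;
  compDl : forall X Y Z (g g' : Mor Y Z) (f : Mor X Y),
      comp (g + g') f = comp g f + comp g' f;
  compDr : forall X Y Z (g : Mor Y Z) (f f' : Mor X Y),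
      comp g (f + f') = comp g f + comp g f'
}.
Arguments idm {p} X.
Arguments comp {p X Y Z}.
Arguments Mor {p}.
Arguments Obj : clear implicits.

Section Cat.
Variable C : preadditive.
Implicit Types X Y Z W A B K Q O U V S P Cc Ca Cb : Obj C.

Definition is_zero_obj (O : Obj C) : Prop :=
  (forall W (h : Mor O W), h = 0) /\ (forall W (h : Mor W O), h = 0).

Definition mono X Y (f : Mor X Y) : Prop :=
  forall W (g1 g2 : Mor W X), comp f g1 = comp f g2 -> g1 = g2.

Definition epi X Y (f : Mor X Y) : Prop :=
  forall W (g1 g2 : Mor Y W), comp g1 f = comp g2 f -> g1 = g2.

Definition is_kernel X Y K (f : Mor X Y) (k : Mor K X) : Prop :=
  comp f k = 0 /\
  forall W (g : Mor W X), comp f g = 0 -> exists! h : Mor W K, comp k h = g.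

Definition is_cokernel X Y Q (f : Mor X Y) (q : Mor Y Q) : Prop :=
  comp q f = 0 /\
  forall W (g : Mor Y W), comp g f = 0 -> exists! h : Mor Q W, comp h q = g.

Definition is_biproduct A B S (i1 : Mor A S) (i2 : Mor B S)
    (p1 : Mor S A) (p2 : Mor S B) : Prop :=
  [/\ comp p1 i1 = idm A, comp p2 i2 = idm B, comp p1 i2 = 0, comp p2 i1 = 0
    & comp i1 p1 + comp i2 p2 = idm S].

Definition abelian : Prop :=
  (exists O, is_zero_obj O) /\
  (forall A B, exists S (i1 : Mor A S) (i2 : Mor B S) p1 p2,
      is_biproduct i1 i2 p1 p2) /\
  (forall X Y (f : Mor X Y), exists K (k : Mor K X), is_kernel f k) /\
  (forall X Y (f : Mor X Y), exists Q (q : Mor Y Q), is_cokernel f q) /\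
  (forall X Y (f : Mor X Y), mono f -> exists Q (q : Mor Y Q), is_kernel q f) /\
  (forall X Y (f : Mor X Y), epi f -> exists K (k : Mor K X), is_cokernel k f).

Definition is_pullback X Y U Z (f : Mor X Y) (p : Mor U Y)
    (g : Mor Z X) (t : Mor Z U) : Prop :=
  comp f g = comp p t /\
  forall W (a : Mor W X) (b : Mor W U), comp f a = comp p b ->
    exists! h : Mor W Z, comp g h = a /\ comp t h = b.

Definition projective (P : Obj C) : Prop :=
  forall A B (e : Mor A B) (g : Mor P B), epi e -> exists h, comp e h = g.

Section Sub.
(* a full subcategory is given by its class of objects *)
Variable T : Obj C -> Prop.

Definition additive_closed : Prop :=
  [/\ forall O, is_zero_obj O -> T O,
      forall A B S (i1 : Mor A S) (i2 : Mor B S) p1 p2,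
        is_biproduct i1 i2 p1 p2 -> T A -> T B -> T S
    & forall X U (s : Mor X U) (r : Mor U X), comp r s = idm X -> T U -> T X].

Definition factors_through_T X Y (f : Mor X Y) : Prop :=
  exists U (a : Mor X U) (b : Mor U Y), T U /\ f = comp b a.

(* equality in the stable category A / <T> *)
Definition stable_eq X Y (f g : Mor X Y) : Prop := factors_through_T (f - g).

Definition stable_iso X Y (f : Mor X Y) : Prop :=
  exists g : Mor Y X, stable_eq (comp g f) (idm X) /\ stable_eq (comp f g) (idm Y).

Definition is_precover U Y (p : Mor U Y) : Prop :=
  T U /\ forall V (h : Mor V Y), T V -> exists h' : Mor V U, comp p h' = h.

Definition contravariantly_finite : Prop :=
  forall Y, exists U (p : Mor U Y), is_precover p.

(* A fixed choice of T-precovers p_Y : T_Y -> Y and of kernels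
   Omega Y -> T_Y of them, defining the loop functor Omega. *)
Record loop_data := LoopData {
  TC : Obj C -> Obj C;
  pc : forall Y, Mor (TC Y) Y;
  OM : Obj C -> Obj C;
  ok : forall Y, Mor (OM Y) (TC Y);
  pc_precover : forall Y, is_precover (pc Y);
  ok_kernel : forall Y, is_kernel (pc Y) (ok Y)
}.

Variable D : loop_data.

(* standard left triangle  Omega Y --w--> Z --g--> X --f--> Y  *)
Definition is_standard_triangle X Y (f : Mor X Y) Z
    (w : Mor (OM D Y) Z) (g : Mor Z X) : Prop :=
  exists t : Mor Z (TC D Y),
    [/\ is_pullback f (pc D Y) g t, comp g w = 0 & comp t w = ok D Y].

(* om : Omega Ca -> Omega Cb represents Omega(c) for c : Ca -> Cb *)
Definition is_omega_lift Ca Cb (c : Mor Ca Cb) (om : Mor (OM D Ca) (OM D Cb)) : Prop :=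
  exists s : Mor (TC D Ca) (TC D Cb),
    comp (pc D Cb) s = comp c (pc D Ca) /\ comp (ok D Cb) om = comp s (ok D Ca).

(* Omega C --h--> A --g--> B --f--> C is a left triangle in the stable
   category: isomorphic (via (Omega c, a, b, c) with a, b, c stable isos,
   squares commuting in the stable category) to a standard left triangle. *)
Definition is_left_triangle A B Cc (h : Mor (OM D Cc) A) (g : Mor A B)
    (f : Mor B Cc) : Prop :=
  exists (X' Y' : Obj C) (f' : Mor X' Y') Z (w : Mor (OM D Y') Z) (g' : Mor Z X'),
    is_standard_triangle f' w g' /\
    exists (a : Mor A Z) (b : Mor B X') (c : Mor Cc Y') (om : Mor (OM D Cc) (OM D Y')),
      [/\ stable_iso a, stable_iso b, stable_iso c & is_omega_lift c om] /\
      [/\ stable_eq (comp c f) (comp f' b),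
          stable_eq (comp b g) (comp g' a)
        & stable_eq (comp a h) (comp w om)].

(* f-bar is a strong monomorphism: Omega Y -> 0 -> X --f--> Y is a left triangle *)
Definition strong_mono X Y (f : Mor X Y) : Prop :=
  exists O, is_zero_obj O /\
    is_left_triangle (0 : Mor (OM D Y) O) (0 : Mor O X) f.

End Sub.
End Cat.

(* If the third term Z of a standard left triangle on f' lies in T, then f' is a
   monomorphism and Omega f' a split epimorphism in the stable category; both
   properties are transported along an isomorphism of left triangles.  For an
   epimorphism f with kernel k : K -> X, the first property makes k factor through
   T, and then id_K agrees modulo <T> with a map through the comparison
   d : Omega Y -> K of the two kernel sequences; since d (Omega f) factors through
   T_X and Omega f is split epi, id_K factors through T, so K is in T.
   Conversely, the pullback Z of f along p_Y is an extension of T_Y by K, split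
   because T_Y is projective, so Z lies in T whenever K does, and the standard
   triangle of f is then isomorphic to Omega Y -> 0 -> X -> Y. *)

From Pilot Require Import Defs.
From mathcomp Require Import all_boot all_algebra.
Set Implicit Arguments. Unset Strict Implicit. Unset Printing Implicit Defensive.
Import GRing.Theory.
Local Open Scope ring_scope.

Local Notation "g ⊚ f" := (Defs.comp g f) (at level 40, left associativity).

Section Preadditive.
Variable C : preadditive.
Implicit Types X Y Z U W K : Obj C.

Lemma comp0l X Y Z (f : Mor X Y) : (0 : Mor Y Z) ⊚ f = 0.
Proof.
have := compDl (0 : Mor Y Z) 0 f; rewrite addr0 => e.
by apply: (addrI ((0 : Mor Y Z) ⊚ f)); rewrite addr0 -e.
Qed.

Lemma comp0r X Y Z (g : Mor Y Z) : g ⊚ (0 : Mor X Y) = 0.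
Proof.
have := compDr g (0 : Mor X Y) 0; rewrite addr0 => e.
by apply: (addrI (g ⊚ (0 : Mor X Y))); rewrite addr0 -e.
Qed.

Lemma compNl X Y Z (g : Mor Y Z) (f : Mor X Y) : (- g) ⊚ f = - (g ⊚ f).
Proof. by apply/eqP; rewrite -subr_eq0 opprK addrC -compDl addrN comp0l. Qed.

Lemma compNr X Y Z (g : Mor Y Z) (f : Mor X Y) : g ⊚ (- f) = - (g ⊚ f).
Proof. by apply/eqP; rewrite -subr_eq0 opprK addrC -compDr addrN comp0r. Qed.

Lemma compBl X Y Z (g g' : Mor Y Z) (f : Mor X Y) : (g - g') ⊚ f = g ⊚ f - g' ⊚ f.
Proof. by rewrite compDl compNl. Qed.

Lemma compBr X Y Z (g : Mor Y Z) (f f' : Mor X Y) : g ⊚ (f - f') = g ⊚ f - g ⊚ f'.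
Proof. by rewrite compDr compNr. Qed.

Lemma kernel_comp0 X Y K (f : Mor X Y) (k : Mor K X) : is_kernel f k -> f ⊚ k = 0.
Proof. by case. Qed.

Lemma kernel_mono X Y K (f : Mor X Y) (k : Mor K X) : is_kernel f k -> mono k.
Proof.
move=> [fk0 uniq] W u1 u2 e.
have [|h [_ Uh]] := uniq W (k ⊚ u1); first by rewrite Defs.compA fk0 comp0l.
by rewrite -(Uh u1 erefl) (Uh u2 (esym e)).
Qed.

Lemma kernel_lift X Y K W (f : Mor X Y) (k : Mor K X) (g : Mor W X) :
  is_kernel f k -> f ⊚ g = 0 -> exists h, k ⊚ h = g.
Proof. by move=> [_ uniq] /uniq [h [e _]]; exists h. Qed.

Lemma pullback_lift X Y U Z W (f : Mor X Y) (p : Mor U Y) (g : Mor Z X)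
    (t : Mor Z U) (a : Mor W X) (b : Mor W U) :
  is_pullback f p g t -> f ⊚ a = p ⊚ b -> exists h, g ⊚ h = a /\ t ⊚ h = b.
Proof. by move=> [_ uniq] /uniq [h [e _]]; exists h. Qed.

Lemma pullback_jointly_mono X Y U Z W (f : Mor X Y) (p : Mor U Y) (g : Mor Z X)
    (t : Mor Z U) (u1 u2 : Mor W Z) :
  is_pullback f p g t -> g ⊚ u1 = g ⊚ u2 -> t ⊚ u1 = t ⊚ u2 -> u1 = u2.
Proof.
move=> [fg uniq] e1 e2.
have [|h [_ Uh]] := uniq W (g ⊚ u1) (t ⊚ u1); first by rewrite !Defs.compA fg.
by rewrite -(Uh u1 (conj erefl erefl)) (Uh u2 (conj (esym e1) (esym e2))).
Qed.

(* The pullback of f and p is the kernel of [f p1 - p p2] on the biproduct. *)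
Lemma pullback_exists X Y U (f : Mor X Y) (p : Mor U Y) :
  abelian C -> exists Z (g : Mor Z X) (t : Mor Z U), is_pullback f p g t.
Proof.
move=> [_ [biprod [kernel _]]].
have [S [i1 [i2 [p1 [p2 [e11 e22 e12 e21 eid]]]]]] := biprod X U.
have [Z [z hz]] := kernel _ _ (f ⊚ p1 - p ⊚ p2).
exists Z, (p1 ⊚ z), (p2 ⊚ z); split.
  by apply/eqP; rewrite -subr_eq0 !Defs.compA -compBl (kernel_comp0 hz).
move=> W a b hab.
have [|h hh] := kernel_lift (g := i1 ⊚ a + i2 ⊚ b) hz.
  rewrite compDr !compBl -!Defs.compA !(Defs.compA p1) !(Defs.compA p2).
  by rewrite e11 e22 e12 e21 !comp0l !comp1m !comp0r subr0 sub0r hab subrr.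
exists h; split.
  by rewrite -!Defs.compA hh !compDr !Defs.compA e11 e22 e12 e21 !comp0l !comp1m
    addr0 add0r.
move=> h' [ga tb]; apply: (kernel_mono hz).
by rewrite hh -ga -tb !Defs.compA -!compDl eid comp1m.
Qed.

End Preadditive.

Section Stable.
Variables (C : preadditive) (T : Obj C -> Prop).
Hypotheses (hA : abelian C) (hT : additive_closed T).
Implicit Types X Y Z U V W K O : Obj C.

Local Notation factors := (factors_through_T T).
Local Notation "u ≡ v" := (stable_eq T u v) (at level 70).

Lemma factors_through X U Y (a : Mor X U) (b : Mor U Y) : T U -> factors (b ⊚ a).
Proof. by move=> TU; exists U, a, b. Qed.

Lemma factors_to X U (u : Mor X U) : T U -> factors u.
Proof. by move=> TU; rewrite -[u]comp1m; exact: factors_through. Qed.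

Lemma factors_compl X Y Z (u : Mor X Y) (v : Mor Y Z) : factors u -> factors (v ⊚ u).
Proof. by move=> [U [a [b [TU ->]]]]; exists U, a, (v ⊚ b); rewrite Defs.compA. Qed.

Lemma factors_compr W X Y (u : Mor X Y) (v : Mor W X) : factors u -> factors (u ⊚ v).
Proof. by move=> [U [a [b [TU ->]]]]; exists U, (a ⊚ v), b; rewrite Defs.compA. Qed.

Lemma factors0 X Y : factors (0 : Mor X Y).
Proof.
have [[O hO] _] := hA; have [T0 _ _] := hT.
by exists O, 0, 0; split; [exact: T0 | rewrite comp0l].
Qed.

Lemma factorsN X Y (u : Mor X Y) : factors u -> factors (- u).
Proof. by move=> [U [a [b [TU ->]]]]; exists U, a, (- b); rewrite compNl. Qed.

(* Two factorisations combine through the biproduct of the intermediate objects. *)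
Lemma factorsD X Y (u v : Mor X Y) : factors u -> factors v -> factors (u + v).
Proof.
move=> [U1 [a1 [b1 [T1 ->]]]] [U2 [a2 [b2 [T2 ->]]]].
have [_ [biprod _]] := hA; have [_ TS _] := hT.
have [S [i1 [i2 [p1 [p2 hb]]]]] := biprod U1 U2.
have [e11 e22 e12 e21 _] := hb.
exists S, (i1 ⊚ a1 + i2 ⊚ a2), (b1 ⊚ p1 + b2 ⊚ p2); split; first exact: TS hb T1 T2.
rewrite !compDr !compDl -!Defs.compA !(Defs.compA p1) !(Defs.compA p2).
by rewrite e11 e22 e12 e21 !comp0l !comp0r addr0 add0r !comp1m.
Qed.

Lemma factors_idm X : factors (idm X) -> T X.
Proof. by have [_ _ summand] := hT; move=> [U [a [b [TU /esym e]]]]; exact: summand e TU. Qed.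

Lemma stable_eq_refl X Y (u : Mor X Y) : u ≡ u.
Proof. by rewrite /stable_eq subrr; exact: factors0. Qed.

Lemma stable_eq_sym X Y (u v : Mor X Y) : u ≡ v -> v ≡ u.
Proof. by move=> /factorsN; rewrite /stable_eq opprB. Qed.

Lemma stable_eq_trans X Y (u v w : Mor X Y) : u ≡ v -> v ≡ w -> u ≡ w.
Proof. by move=> uv vw; have := factorsD uv vw; rewrite /stable_eq addrA subrK. Qed.

Lemma stable_eq_compl X Y Z (u u' : Mor X Y) (v : Mor Y Z) : u ≡ u' -> v ⊚ u ≡ v ⊚ u'.
Proof. by rewrite /stable_eq -compBr; exact: factors_compl. Qed.

Lemma stable_eq_compr W X Y (u u' : Mor X Y) (v : Mor W X) : u ≡ u' -> u ⊚ v ≡ u' ⊚ v.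
Proof. by rewrite /stable_eq -compBl; exact: factors_compr. Qed.

Lemma stable_eq_factors X Y (u v : Mor X Y) : u ≡ v -> factors v -> factors u.
Proof. by move=> uv /(factorsD uv); rewrite subrK. Qed.

Lemma stable_iso_from_zero O Z (a : Mor O Z) : is_zero_obj O -> stable_iso T a -> T Z.
Proof.
move=> [from0 _] [a' [_ aa']]; apply: factors_idm.
apply: (stable_eq_factors (stable_eq_sym aa')).
by rewrite (from0 _ a) comp0l; exact: factors0.
Qed.

Section Loop.
Variable D : loop_data T.

Lemma TC_in_T Y : T (TC D Y).
Proof. by case: (pc_precover D Y). Qed.

Lemma pc_lift Y V (h : Mor V Y) : T V -> exists h', pc D Y ⊚ h' = h.
Proof. by case: (pc_precover D Y) => _ lift /(lift V h). Qed.

Lemma omega_lift_exists X Y (c : Mor X Y) : exists om, is_omega_lift (D := D) c om.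
Proof.
have [s hs] := pc_lift (c ⊚ pc D X) (TC_in_T X).
have [|om hom] := kernel_lift (g := s ⊚ ok D X) (ok_kernel D Y).
  by rewrite Defs.compA hs -Defs.compA (kernel_comp0 (ok_kernel D X)) comp0r.
by exists om, s.
Qed.

Lemma omega_lift_comp X Y Z (c1 : Mor X Y) (c2 : Mor Y Z) om1 om2 :
  is_omega_lift (D := D) c1 om1 -> is_omega_lift (D := D) c2 om2 ->
  is_omega_lift (D := D) (c2 ⊚ c1) (om2 ⊚ om1).
Proof.
move=> [s1 [p1 o1]] [s2 [p2 o2]]; exists (s2 ⊚ s1); split.
  by rewrite Defs.compA p2 -Defs.compA p1 Defs.compA.
by rewrite Defs.compA o2 -Defs.compA o1 Defs.compA.
Qed.

Lemma omega_lift_sub X Y (c1 c2 : Mor X Y) om1 om2 :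
  is_omega_lift (D := D) c1 om1 -> is_omega_lift (D := D) c2 om2 ->
  is_omega_lift (D := D) (c1 - c2) (om1 - om2).
Proof.
move=> [s1 [p1 o1]] [s2 [p2 o2]]; exists (s1 - s2).
by rewrite !compBr !compBl p1 p2 o1 o2.
Qed.

Lemma omega_lift_id X : is_omega_lift (D := D) (idm X) (idm (OM D X)).
Proof. by exists (idm _); rewrite !comp1m !compm1. Qed.

Lemma omega_lift_factors X Y (c : Mor X Y) om :
  factors c -> is_omega_lift (D := D) c om -> factors om.
Proof.
move=> [V [a [b [TV ec]]]] [s [ps os]].
have [b' hb'] := pc_lift b TV.
have [|y hy] := kernel_lift (g := s - b' ⊚ (a ⊚ pc D X)) (ok_kernel D Y).
  by rewrite compBr ps ec !Defs.compA hb' subrr.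
have -> : om = y ⊚ ok D X.
  apply: (kernel_mono (ok_kernel D Y)).
  rewrite os Defs.compA hy compBl -!Defs.compA (kernel_comp0 (ok_kernel D X)).
  by rewrite !comp0r subr0.
exact: factors_through (TC_in_T X).
Qed.

Lemma omega_lift_stable_eq X Y (c1 c2 : Mor X Y) om1 om2 :
  c1 ≡ c2 -> is_omega_lift (D := D) c1 om1 -> is_omega_lift (D := D) c2 om2 ->
  om1 ≡ om2.
Proof. by move=> c12 h1 h2; exact: omega_lift_factors c12 (omega_lift_sub h1 h2). Qed.

Definition stably_mono X Y (f : Mor X Y) : Prop :=
  forall W (u : Mor W X), factors (f ⊚ u) -> factors u.

Definition loop_split_epi X Y (f : Mor X Y) : Prop :=
  forall om : Mor (OM D X) (OM D Y), is_omega_lift f om ->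
  exists s, om ⊚ s ≡ idm (OM D Y).

Section StandardTriangle.
Variables (X Y Z : Obj C) (f : Mor X Y) (w : Mor (OM D Y) Z) (g : Mor Z X).
Hypotheses (std : is_standard_triangle f w g) (TZ : T Z).

Lemma standard_triangle_stably_mono : stably_mono f.
Proof.
have [t [pb _ _]] := std.
move=> W u [V [a [b [TV fu]]]].
have [b' hb'] := pc_lift b TV.
have [|h [gh _]] := pullback_lift (a := u) (b := b' ⊚ a) pb.
  by rewrite fu Defs.compA hb'.
by rewrite -gh; exact: factors_through.
Qed.

Lemma standard_triangle_loop_split_epi : loop_split_epi f.
Proof.
have [t [pb _ _]] := std.
move=> om [s [ps os]].
have [|a [ga ta]] := pullback_lift (a := 0 : Mor (OM D Y) X) (b := ok D Y) pb.
  by rewrite comp0r (kernel_comp0 (ok_kernel D Y)).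
have [g' hg'] := pc_lift g TZ.
have [|x hx] := kernel_lift (g := g' ⊚ a) (ok_kernel D X).
  by rewrite Defs.compA hg' ga.
have [|y hy] := kernel_lift (g := t - s ⊚ g') (ok_kernel D Y).
  by rewrite compBr -(proj1 pb) Defs.compA ps -Defs.compA hg' subrr.
exists x; apply: stable_eq_sym; rewrite /stable_eq.
have -> : idm (OM D Y) - om ⊚ x = y ⊚ a.
  apply: (kernel_mono (ok_kernel D Y)).
  rewrite compBr compm1 Defs.compA os -Defs.compA hx (Defs.compA _ y) hy compBl ta.
  by rewrite Defs.compA.
exact: factors_through.
Qed.

End StandardTriangle.

Section Transport.
Variables (X Y X' Y' : Obj C) (f : Mor X Y) (f' : Mor X' Y').
Variables (b : Mor X X') (b' : Mor X' X) (c : Mor Y Y') (c' : Mor Y' Y).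
Hypothesis cf : c ⊚ f ≡ f' ⊚ b.

Lemma stably_mono_transport : b' ⊚ b ≡ idm X -> stably_mono f' -> stably_mono f.
Proof.
move=> bb mono' W u fu.
have /mono' bu : factors (f' ⊚ (b ⊚ u)).
  rewrite Defs.compA; apply: (stable_eq_factors (stable_eq_compr u (stable_eq_sym cf))).
  by rewrite -Defs.compA; exact: factors_compl.
apply: (stable_eq_factors (v := b' ⊚ (b ⊚ u))); last exact: factors_compl.
rewrite Defs.compA -{1}[u]comp1m; apply: stable_eq_sym; exact: stable_eq_compr.
Qed.

Lemma loop_split_epi_transport :
  b ⊚ b' ≡ idm X' -> c' ⊚ c ≡ idm Y -> loop_split_epi f' -> loop_split_epi f.
Proof.
move=> bb cc split' om hom.
have [omc hc] := omega_lift_exists c.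
have [omc' hc'] := omega_lift_exists c'.
have [omb' hb'] := omega_lift_exists b'.
have [om' hom'] := omega_lift_exists f'.
have [s hs] := split' om' hom'.
have c'f' : c' ⊚ f' ≡ f ⊚ b'.
  apply: (stable_eq_trans (v := c' ⊚ (f' ⊚ b) ⊚ b')).
    rewrite -Defs.compA -Defs.compA -{1}[f']compm1; apply: stable_eq_compl.
    by apply: stable_eq_compl; exact: stable_eq_sym.
  apply: (stable_eq_trans (v := c' ⊚ c ⊚ f ⊚ b')).
    by rewrite -(Defs.compA c' c); apply: stable_eq_compr; apply: stable_eq_compl;
      exact: stable_eq_sym.
  by rewrite -{2}[f]comp1m; apply: stable_eq_compr; exact: stable_eq_compr.
exists (omb' ⊚ (s ⊚ omc)).
apply: (stable_eq_trans (v := omc' ⊚ om' ⊚ (s ⊚ omc))).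
  rewrite Defs.compA; apply: stable_eq_compr; apply: stable_eq_sym.
  exact: omega_lift_stable_eq c'f' (omega_lift_comp hom' hc') (omega_lift_comp hb' hom).
apply: (stable_eq_trans (v := omc' ⊚ omc)).
  rewrite -Defs.compA (Defs.compA om'); apply: stable_eq_compl.
  by rewrite -{2}[omc]comp1m; apply: stable_eq_compr.
exact: omega_lift_stable_eq cc (omega_lift_comp hc hc') (omega_lift_id Y).
Qed.

End Transport.

Section KernelComparison.
Variables (X Y K : Obj C) (f : Mor X Y) (k : Mor K X).
Variables (q : Mor (TC D Y) X) (d : Mor (OM D Y) K).
Hypotheses (hk : is_kernel f k) (hq : f ⊚ q = pc D Y) (hd : k ⊚ d = q ⊚ ok D Y).

Lemma kernel_idm_through_loop : factors k -> exists e, idm K ≡ d ⊚ e.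
Proof.
move=> [V [m [n [TV ek]]]].
have [nu hnu] := pc_lift (f ⊚ n) TV.
have [|e he] := kernel_lift (g := nu ⊚ m) (ok_kernel D Y).
  by rewrite Defs.compA hnu -Defs.compA -ek (kernel_comp0 hk).
have [|rho hrho] := kernel_lift (g := n - q ⊚ nu) hk.
  by rewrite compBr Defs.compA hq hnu subrr.
exists e; rewrite /stable_eq.
have -> : idm K - d ⊚ e = rho ⊚ m.
  apply: (kernel_mono hk).
  rewrite compBr compm1 Defs.compA hd -Defs.compA he (Defs.compA k) hrho compBl -ek.
  by rewrite Defs.compA.
exact: factors_through.
Qed.

Lemma kernel_comparison_loop_factors om :
  is_omega_lift (D := D) f om -> factors (d ⊚ om).
Proof.
move=> [s [ps os]].
have [|z hz] := kernel_lift (g := q ⊚ s - pc D X) hk.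
  by rewrite compBr Defs.compA hq ps subrr.
have -> : d ⊚ om = z ⊚ ok D X.
  apply: (kernel_mono hk).
  rewrite !Defs.compA hd hz -Defs.compA os compBl (kernel_comp0 (ok_kernel D X)).
  by rewrite subr0 Defs.compA.
exact: factors_through (TC_in_T X).
Qed.

End KernelComparison.

Hypothesis projT : forall U, T U -> projective U.

Lemma kernel_in_T X Y K (f : Mor X Y) (k : Mor K X) :
  epi f -> is_kernel f k -> stably_mono f -> loop_split_epi f -> T K.
Proof.
move=> epif hk mono split.
have [q hq] := projT (TC_in_T Y) (pc D Y) epif.
have [|d hd] := kernel_lift (g := q ⊚ ok D Y) hk.
  by rewrite Defs.compA hq (kernel_comp0 (ok_kernel D Y)).
have [|e he] := kernel_idm_through_loop hk hq hd.
  by apply: mono; rewrite (kernel_comp0 hk); exact: factors0.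
have [om hom] := omega_lift_exists f.
have [s hs] := split om hom.
apply: factors_idm; apply: (stable_eq_factors he).
apply: (stable_eq_factors (v := d ⊚ om ⊚ (s ⊚ e))).
  rewrite -Defs.compA; apply: stable_eq_compl.
  by rewrite Defs.compA -{1}[e]comp1m; apply: stable_eq_sym; exact: stable_eq_compr.
exact: factors_compr (kernel_comparison_loop_factors hk hq hd hom).
Qed.

Lemma standard_triangle_exists X Y (f : Mor X Y) :
  exists Z (w : Mor (OM D Y) Z) (g : Mor Z X), is_standard_triangle f w g.
Proof.
have [Z [g [t pb]]] := pullback_exists f (pc D Y) hA.
have [|w [gw tw]] := pullback_lift (a := 0 : Mor (OM D Y) X) (b := ok D Y) pb.
  by rewrite comp0r (kernel_comp0 (ok_kernel D Y)).
by exists Z, w, g, t.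
Qed.

(* The pullback of the epimorphism f along p_Y is an extension of T_Y by ker f,
   which splits because T_Y is projective. *)
Lemma standard_triangle_in_T X Y K Z (f : Mor X Y) (k : Mor K X)
    (w : Mor (OM D Y) Z) (g : Mor Z X) :
  epi f -> is_kernel f k -> T K -> is_standard_triangle f w g -> T Z.
Proof.
move=> epif hk TK [t [pb _ _]].
have [q hq] := projT (TC_in_T Y) (pc D Y) epif.
have [|s [gs ts]] := pullback_lift (a := q) (b := idm (TC D Y)) pb.
  by rewrite compm1.
have [|j [gj tj]] := pullback_lift (a := k) (b := 0 : Mor K (TC D Y)) pb.
  by rewrite comp0r (kernel_comp0 hk).
have [|r hr] := kernel_lift (g := g ⊚ (idm Z - s ⊚ t)) hk.
  rewrite Defs.compA (proj1 pb) -Defs.compA compBr compm1 Defs.compA ts comp1m.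
  by rewrite subrr comp0r.
apply: factors_idm.
have -> : idm Z = j ⊚ r + s ⊚ t.
  apply: (pullback_jointly_mono pb).
    rewrite compm1 compDr !Defs.compA gj hr gs compBr compm1 Defs.compA gs.
    by rewrite subrK.
  by rewrite compm1 compDr !Defs.compA tj ts comp0l comp1m add0r.
by apply: factorsD; apply: factors_through => //; exact: TC_in_T.
Qed.

Lemma strong_mono_of_standard_triangle X Y Z (f : Mor X Y)
    (w : Mor (OM D Y) Z) (g : Mor Z X) :
  is_standard_triangle f w g -> T Z -> strong_mono D f.
Proof.
move=> std TZ; have [[O [from0 to0]] _] := hA.
have stable_iso_idm W : stable_iso T (idm W).
  by exists (idm W); rewrite comp1m; split; exact: stable_eq_refl.
exists O; split => //; exists X, Y, f, Z, w, g; split => //.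
exists 0, (idm X), (idm Y), (idm (OM D Y)); split; split => //.
- exists 0; split; last exact: factors_to.
  by rewrite /stable_eq (from0 _ (_ - _)); exact: factors0.
- exact: omega_lift_id.
- by rewrite comp1m compm1; exact: stable_eq_refl.
- by rewrite !comp0r; exact: stable_eq_refl.
- exact: factors_to.
Qed.

End Loop.
End Stable.

Theorem proposition5p2 (C : preadditive) (T : Obj C -> Prop) (D : loop_data T) :
  abelian C -> additive_closed T ->
  (forall U, T U -> projective U) -> contravariantly_finite T ->
  forall (X Y : Obj C) (f : Mor X Y), epi f ->
  (strong_mono D f <-> exists K (k : Mor K X), is_kernel f k /\ T K).
Proof.
move=> hA hT projT _ X Y f epif; split.
  move=> [O [zeroO [X' [Y' [f' [Z [w [g [std triangle_iso]]]]]]]]].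
  have [a [b [c [_ [[isoa [b' [bb bb']] [c' [cc _]] _] [cf _ _]]]]]] := triangle_iso.
  have TZ := stable_iso_from_zero hA hT zeroO isoa.
  have [_ [_ [kernels _]]] := hA; have [K [k hk]] := kernels _ _ f.
  exists K, k; split => //; apply: (kernel_in_T (D := D) hA hT projT epif hk).
    exact (stably_mono_transport hA hT cf bb (standard_triangle_stably_mono std TZ)).
  exact (loop_split_epi_transport hA hT cf bb' cc
    (standard_triangle_loop_split_epi std TZ)).
move=> [K [k [hk TK]]].
have [Z [w [g std]]] := standard_triangle_exists hA D f.
apply: (strong_mono_of_standard_triangle hA hT std).
exact (standard_triangle_in_T hA hT projT epif hk TK std).
Qed.
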